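(* Let $\alpha\in(0,1]$ and let $\Omega_\alpha\subset\mathbb{C}$ be the bounded open region enclosed by the closed curve $$\beta(t)=1+2^{\alpha}\left(\sin\tfrac{t}{2}\right)^{\alpha}e^{\,i\left(\alpha\frac{\pi}{2}+t\left(1-\frac{\alpha}{2}\right)\right)},\qquad 0\le t\le 2\pi .$$ Then for a real number $\lambda$, $\lambda\in\Omega_\alpha$ if and only if $1-2^{\alpha}<\lambda<1$.
   Context: Equivalently $\beta(t)=1+e^{it}(1-e^{-it})^{\alpha}$ with the principal branch of the power. $\Omega_\alpha$ is the stability region for eigenvalues of the connectivity matrix in linear fractional-order coupled map lattices of order $\alpha$. *)

(* the complex plane is modelled as R * R
   (product topology), z = x + i y  <->  (x, y). *)
From HB Require Import structures.
From mathcomp Require Import all_boot all_order all_algebra.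
From mathcomp Require Import all_classical all_reals all_analysis.
Set Implicit Arguments. Unset Strict Implicit. Unset Printing Implicit Defensive.
Import Order.TTheory GRing.Theory Num.Theory numFieldNormedType.Exports.
Local Open Scope classical_set_scope.
Local Open Scope ring_scope.

Section Curve.
Variable R : realType.

Definition beta_mod (a t : R) : R := (2 `^ a) * (sin (t / 2)) `^ a.
Definition beta_arg (a t : R) : R := a * pi / 2 + t * (1 - a / 2).

Definition beta (a t : R) : R * R :=
  (1 + beta_mod a t * cos (beta_arg a t), beta_mod a t * sin (beta_arg a t)).

Definition curve (a : R) : set (R * R) := beta a @` `[0, 2 * pi].

Definition bounded_plane (S : set (R * R)) : Prop :=
  exists M : R, forall p, S p -> `|p.1| <= M /\ `|p.2| <= M.

(* Omega_a : the bounded open region enclosed by the curve, i.e. the union of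
   the bounded connected components of the complement of the curve. *)
Definition Omega (a : R) : set (R * R) :=
  [set z | ~ curve a z /\ bounded_plane (@connected_component (R * R)%type (~` curve a) z)].

End Curve.

From HB Require Import structures.
From mathcomp Require Import all_boot all_order all_algebra.
From mathcomp Require Import all_classical all_reals all_analysis.
From mathcomp Require Import ring lra.
Set Implicit Arguments. Unset Strict Implicit. Unset Printing Implicit Defensive.
Import Order.TTheory GRing.Theory Num.Theory numFieldNormedType.Exports.
Local Open Scope classical_set_scope.
Local Open Scope ring_scope.

(* Write [1 - z = r e^(i psi)] with [-pi < psi < pi].  The curve meets the ray
   from [1] in the direction of [z - 1] only at the parameter [t] with
   [a pi / 2 + t (1 - a / 2) = psi + pi], at distance [(2 sin (t / 2)) ^ a]
   from [1].  Call [inner] the set of points strictly closer to [1] than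
   that point, off the half-line [[1, +oo)].  It is open and bounded, and
   inside the complement of the curve it is also closed: near a point [x > 1]
   of the real axis it is empty, because points of [inner] left of [1] lie in
   the cone [|psi| < pi - a pi / 2].  Hence [inner] contains the component of
   every real [lam] in [(1 - 2^a, 1)].  Every other real [lam] is on the curve
   (at [1] or [1 - 2^a]) or joined to infinity by a real half-line avoiding
   the curve. *)

Section RealFacts.
Variable R : realType.

Definition polar_arg (p q : R) : R :=
  2 * atan (q / (Num.sqrt (p ^+ 2 + q ^+ 2) + p)).

Lemma polar_arg_bound (p q : R) : - pi < polar_arg p q < pi.
Proof.
rewrite /polar_arg; set s := _ / _.
by have := atan_gtNpi2 s; have := atan_ltpi2 s; move=> *; apply/andP; split; lra.
Qed.

(* The half-angle formula: [polar_arg p q] is the principal argument of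
   [p + i q] off the ray [p <= 0, q = 0]. *)
Lemma polar_argP (p q : R) (r := Num.sqrt (p ^+ 2 + q ^+ 2)) : 0 < r + p ->
  p = r * cos (polar_arg p q) /\ q = r * sin (polar_arg p q).
Proof.
move=> d_gt0; have r2 : r ^+ 2 = p ^+ 2 + q ^+ 2.
  by rewrite sqr_sqrtr // addr_ge0 // sqr_ge0.
have r_gt0 : 0 < r.
  rewrite lt_neqAle sqrtr_ge0 andbT; apply/eqP => r0.
  have p0 : p = 0 by apply/eqP; rewrite -sqrf_eq0; apply/eqP; nra.
  by move: d_gt0; rewrite -r0 p0 addr0 ltxx.
rewrite /polar_arg -/r; set d := r + p; set s := q / d.
have d0 : d != 0 by rewrite gt_eqF.
have cos2 : cos (atan s) ^+ 2 = d / (2 * r).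
  rewrite cos_atan exprVn sqr_sqrtr; last by rewrite addr_ge0 ?sqr_ge0.
  have -> : 1 + s ^+ 2 = 2 * r / d.
    have -> : 1 + s ^+ 2 = (d ^+ 2 + q ^+ 2) / d ^+ 2 by rewrite /s; field.
    have -> : d ^+ 2 + q ^+ 2 = 2 * r * d by rewrite /d; nra.
    by field.
  by rewrite invf_div.
have sin_atan : sin (atan s) = s * cos (atan s).
  by have := atanK s; rewrite /tan => e; rewrite -[X in X * _]e divfK //
    cos_atan invr_eq0 gt_eqF // sqrtr_gt0 ltr_wpDr ?sqr_ge0.
rewrite mulr_natl cos_mulr2n sin_mulr2n cos2 sin_atan.
rewrite [cos _ * (_ * _)]mulrCA -expr2 cos2 /s /d.
by split; field; rewrite ?gt_eqF.
Qed.

Lemma sin_le0_Npi0 (x : R) : - pi <= x <= 0 -> sin x <= 0.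
Proof.
move=> /andP[x1 x2]; rewrite -[x]opprK sinN oppr_le0.
by apply: sin_ge0_pi; apply/andP; split; lra.
Qed.

Lemma sin_le0_pi2pi (x : R) : pi <= x <= 2 * pi -> sin x <= 0.
Proof.
move=> /andP[x1 x2]; have -> : x = (x - pi) + pi by ring.
by rewrite sinDpi oppr_le0; apply: sin_ge0_pi; apply/andP; split; lra.
Qed.

Lemma continuous_powR (c x : R) : 0 < x ->
  {for x, continuous (fun y : R => y `^ c)}.
Proof.
move=> x_gt0.
have x_near : \forall y \near x, 0 < y := @cvgr_gt R R (nbhs x) _ id x cvg_id 0 x_gt0.
have e : {near x, (fun y => expR (c * ln y)) =1 (fun y => y `^ c)}.
  by near=> y; rewrite /powR gt_eqF //; near: y; exact: x_near.
apply: cvg_trans (near_eq_cvg e) _; rewrite /powR gt_eqF //.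
have ln_cvg : (fun y => c * ln y) @ x --> c * ln x.
  by apply: cvgMl_tmp; exact: continuous_ln.
exact: continuous_comp ln_cvg (@continuous_expR R _).
Unshelve. all: by end_near. Qed.

Lemma connected_real_axis (S : set R) : is_interval S ->
  connected [set (x, 0 : R) | x in S].
Proof.
move=> iS; apply: connected_continuous_connected; first exact/connected_intervalP.
apply: continuous_subspaceT => x.
exact: (@cvg_pair _ _ _ _ (nbhs x) (nbhs (0 : R))) cvg_id (cvg_cst _).
Qed.

End RealFacts.

Lemma connected_subset_open (T : topologicalType) (C W : set T) :
  connected C -> C `&` W !=set0 -> open W -> C `&` closure W `<=` W -> C `<=` W.
Proof.
move=> Ccon CW0 oW clW.
have CWE : C `&` W = C.
  apply: Ccon => //; first by exists W.
  exists (closure W); first exact: closed_closure.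
  apply/seteqP; split => y [Cy Wy]; split => //; first exact: subset_closure.
  exact: clW.
by move=> y Cy; rewrite -CWE in Cy; case: Cy.
Qed.

Section Omega.
Variables (R : realType) (a : R).
Hypotheses (a_gt0 : 0 < a) (a_le1 : a <= 1).
(* [lra] ignores section hypotheses, hence the occasional [have := a_le1]. *)

Definition xo (z : R * R) : R := 1 - z.1.
Definition yo (z : R * R) : R := - z.2.
Definition dist1 (z : R * R) : R := Num.sqrt (xo z ^+ 2 + yo z ^+ 2).
Definition arg1 (z : R * R) : R := polar_arg (xo z) (yo z).

(* The parameter at which the curve leaves [1] in the direction [s + pi]. *)
Definition param (s : R) : R := (pi + s - a * pi / 2) / (1 - a / 2).

(* The curve point on the ray from [1] through [z] lies at distance
   [(2 sin (param (arg1 z) / 2)) ^ a] from [1]. *)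
Definition gap (z : R * R) : R := dist1 z `^ a^-1 - 2 * sin (param (arg1 z) / 2).

(* [0 < dist1 z + xo z] excludes the half-line [[1, +oo)], where [arg1] jumps. *)
Definition inner : set (R * R) := [set z | 0 < dist1 z + xo z /\ gap z < 0].

Lemma norm_xo_yo_le_dist1 z : `|xo z| <= dist1 z /\ `|yo z| <= dist1 z.
Proof.
by split; rewrite -sqrtr_sqr ler_wsqrtr // ?lerDl ?lerDr sqr_ge0.
Qed.

Lemma dist1_sqr z : dist1 z ^+ 2 = xo z ^+ 2 + yo z ^+ 2.
Proof. by rewrite sqr_sqrtr // addr_ge0 // sqr_ge0. Qed.

Lemma dist1_gt0 z : 0 < dist1 z + xo z -> 0 < dist1 z.
Proof.
by have [+ _] := norm_xo_yo_le_dist1 z; have := ler_norm (xo z); lra.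
Qed.

Lemma one_sub_half_a_gt0 : 0 < 1 - a / 2. Proof. by have := a_le1; lra. Qed.

Lemma paramE s : param s * (1 - a / 2) = pi + s - a * pi / 2.
Proof. by rewrite /param divfK // gt_eqF // one_sub_half_a_gt0. Qed.

Lemma beta_arg_param s : beta_arg a (param s) = s + pi.
Proof. by rewrite /beta_arg mulrC paramE; ring. Qed.

Lemma param_bound s : - pi < s < pi -> 0 < sin (param s / 2) ->
  0 < param s < 2 * pi.
Proof.
move=> /andP[s1 s2] sin_gt0; have e := paramE s; have k := one_sub_half_a_gt0.
have pi_gt0 := @pi_gt0 R; have := a_gt0; have := a_le1 => ? ?.
have api : a * pi <= pi by nra.
have api0 : 0 < a * pi by nra.
set t := param s in e sin_gt0 *.
have t_ge : - 2 * pi <= t.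
  rewrite leNgt; apply/negP => ht.
  suff : t * (1 - a / 2) < - 2 * pi * (1 - a / 2) by lra.
  by rewrite ltr_pM2r.
have t_le : t <= 4 * pi.
  rewrite leNgt; apply/negP => ht.
  suff : 4 * pi * (1 - a / 2) < t * (1 - a / 2) by lra.
  by rewrite ltr_pM2r.
apply/andP; split; rewrite ltNge; apply/negP => ht.
- suff : sin (t / 2) <= 0 by lra.
  by apply: sin_le0_Npi0; apply/andP; split; lra.
- suff : sin (t / 2) <= 0 by lra.
  by apply: sin_le0_pi2pi; apply/andP; split; lra.
Qed.

Lemma inner_sin_gt0 z : inner z -> 0 < sin (param (arg1 z) / 2).
Proof. by move=> [_]; rewrite /gap; have := powR_ge0 (dist1 z) a^-1; lra. Qed.

Lemma inner_arg1_bound z : inner z -> `|arg1 z| < pi - a * pi / 2.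
Proof.
move=> /inner_sin_gt0 /(param_bound (polar_arg_bound _ _)) /andP[t1 t2].
have e := paramE (arg1 z); have k := one_sub_half_a_gt0; have pi_gt0 := @pi_gt0 R.
have := a_gt0; have := a_le1 => ? ?.
have : 0 * (1 - a / 2) < param (arg1 z) * (1 - a / 2) by rewrite ltr_pM2r.
have : param (arg1 z) * (1 - a / 2) < 2 * pi * (1 - a / 2) by rewrite ltr_pM2r.
by rewrite ltr_norml => *; apply/andP; split; nra.
Qed.

Let c := cos (a * pi / 2).

Lemma c_ge0 : 0 <= c.
Proof.
have pi_gt0 := @pi_gt0 R; have := a_gt0; have := a_le1 => ? ?.
by apply: cos_ge0_pihalf; apply/andP; split; nra.
Qed.

Lemma c_lt1 : c < 1.
Proof.
have pi_gt0 := @pi_gt0 R; have := a_gt0; have := a_le1 => ? ?.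
rewrite -cos0 /c.
by rewrite ltr_cos ?in_itv /=; try (apply/andP; split); nra.
Qed.

(* The cone of [inner_arg1_bound], written without angles. *)
Lemma inner_cone z : inner z -> xo z < 0 ->
  xo z ^+ 2 * (1 - c ^+ 2) < c ^+ 2 * yo z ^+ 2.
Proof.
move=> Wz xo_lt0; have r_gt0 := dist1_gt0 Wz.1.
have [ex ey] := polar_argP Wz.1; rewrite -/(dist1 z) -/(arg1 z) in ex ey.
have arg_lt := inner_arg1_bound Wz; have pi_gt0 := @pi_gt0 R.
have := a_gt0; have := a_le1 => ? ?.
have cos_gt : - c < cos (arg1 z).
  have <- : cos (pi - a * pi / 2) = - c by rewrite cosB cospi sinpi /c; ring.
  have api0 : 0 <= a * pi by nra.
  have api1 : a * pi <= pi by nra.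
  rewrite -[cos (arg1 z)]cos_norm ltr_cos ?in_itv //= ?normr_ge0 /=;
    [lra | apply/andP; split; lra].
have cos_lt0 : cos (arg1 z) < 0 by move: xo_lt0; rewrite ex pmulr_rlt0.
have cos2 : cos (arg1 z) ^+ 2 < c ^+ 2 by have := c_ge0; nra.
have ey2 : yo z ^+ 2 = dist1 z ^+ 2 - xo z ^+ 2 by rewrite dist1_sqr; ring.
have : dist1 z ^+ 2 * cos (arg1 z) ^+ 2 < dist1 z ^+ 2 * c ^+ 2.
  by rewrite ltr_pM2l // exprn_gt0.
by rewrite ey2 ex; nra.
Qed.

Lemma curve_real_axis x : curve a (x, 0) -> x = 1 \/ x = 1 - 2 `^ a.
Proof.
move=> [t]; rewrite /= in_itv /= => /andP[t0 t1] [e1 e2].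
have pi_gt0 := @pi_gt0 R; have k := one_sub_half_a_gt0.
have := a_gt0; have := a_le1 => ? ?; have api : 0 < a * pi by nra.
have [m0|m0] := eqVneq (beta_mod a t) 0.
  by left; rewrite -e1 m0 mul0r addr0.
move/eqP: e2; rewrite mulf_eq0 (negbTE m0) /= => /eqP sin0.
set g := beta_arg a t in sin0 e1.
have tk1 : 0 <= t * (1 - a / 2) by rewrite mulr_ge0 // ltW.
have tk2 : t * (1 - a / 2) <= 2 * pi * (1 - a / 2) by rewrite ler_pM2r.
have g1 : a * pi / 2 <= g by rewrite /g /beta_arg; lra.
have g2 : g <= 2 * pi - a * pi / 2 by rewrite /g /beta_arg; lra.
have g_pi : g = pi.
  case: (ltgtP g pi) => // hg; suff : 0 < `|sin g| by rewrite sin0 normr0 ltxx.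
  - by rewrite gtr0_norm //; apply: sin_gt0_pi; apply/andP; split; lra.
  - have -> : sin g = - sin (g - pi) by rewrite -sinDpi subrK.
    rewrite normrN gtr0_norm //; apply: sin_gt0_pi; apply/andP; split; lra.
have t_pi : t = pi.
  by apply: (mulIf (lt0r_neq0 k)); move: g_pi; rewrite /g /beta_arg; lra.
right; rewrite -e1 g_pi cospi /beta_mod t_pi sin_pihalf powR1; ring.
Qed.

Lemma curve_one : curve a (1, 0).
Proof.
exists 0; first by rewrite /= in_itv /= lexx /=; have := @pi_gt0 R; lra.
by rewrite /beta /beta_mod mul0r sin0 powR0 ?gt_eqF // !mulr0 !mul0r addr0.
Qed.

Lemma curve_one_sub_pow : curve a (1 - 2 `^ a, 0).
Proof.
exists pi.
  by rewrite /= in_itv /=; have := @pi_gt0 R => ?; apply/andP; split; lra.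
rewrite /beta; have -> : beta_arg a pi = pi by rewrite /beta_arg; field.
by rewrite /beta_mod sin_pihalf powR1 cospi sinpi; congr pair; ring.
Qed.

Lemma gap_eq0_curve z : 0 < dist1 z + xo z -> gap z = 0 -> curve a z.
Proof.
move=> d_gt0 gap0; have r_gt0 := dist1_gt0 d_gt0.
have [ex ey] := polar_argP d_gt0; rewrite -/(dist1 z) -/(arg1 z) in ex ey.
have pr := powR_gt0 a^-1 r_gt0; rewrite /gap in gap0.
have sinE : sin (param (arg1 z) / 2) = dist1 z `^ a^-1 / 2 by lra.
have sin_gt0 : 0 < sin (param (arg1 z) / 2) by rewrite sinE; lra.
have /andP[t0 t1] := param_bound (polar_arg_bound _ _) sin_gt0.
exists (param (arg1 z)); first by rewrite /= in_itv /=; apply/andP; split; lra.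
rewrite /beta; have -> : beta_mod a (param (arg1 z)) = dist1 z.
  rewrite /beta_mod -powRM ?(ltW sin_gt0) // sinE mulrC divfK // -powRrM.
  by rewrite mulVf ?gt_eqF // powRr1 // ltW.
rewrite beta_arg_param cosDpi sinDpi.
by case: z {d_gt0 r_gt0 gap0 pr sinE sin_gt0 t0 t1} ex ey => x y;
  rewrite /xo /yo /= => e1 e2; congr pair; lra.
Qed.

Lemma inner_bounded : bounded_plane inner.
Proof.
exists 3 => z [_ gap_lt0]; rewrite /gap in gap_lt0.
have sin1 := sin_le1 (param (arg1 z) / 2).
have r2 : dist1 z < 2.
  have [r_le1|r_gt1] := leP (dist1 z) 1; first lra.
  have : dist1 z <= dist1 z `^ a^-1.
    by apply: le1r_powR; [exact: ltW | rewrite invf_ge1].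
  lra.
have [] := norm_xo_yo_le_dist1 z; rewrite /xo /yo normrN !ler_norml.
by move=> /andP[? ?] /andP[? ?]; split; apply/andP; split; lra.
Qed.

Lemma inner_real_axis lam : 1 - 2 `^ a < lam < 1 -> inner (lam, 0).
Proof.
move=> /andP[l1 l2].
have distE : dist1 (lam, 0) = 1 - lam.
  by rewrite /dist1 /xo /yo /= oppr0 expr0n /= addr0 sqrtr_sqr ger0_norm //; lra.
have argE : arg1 (lam, 0) = 0.
  by rewrite /arg1 /polar_arg /yo /= oppr0 mul0r atan0 mulr0.
have param0 : param 0 = pi.
  by apply: (mulIf (lt0r_neq0 one_sub_half_a_gt0)); rewrite paramE; ring.
split; first by rewrite distE /xo /=; lra.
rewrite /gap distE argE param0 sin_pihalf.
have : (1 - lam) `^ a^-1 < (2 `^ a) `^ a^-1.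
  by apply: gt0_ltr_powR; rewrite ?invr_gt0 ?inE ?nnegrE ?powR_ge0 //; lra.
by rewrite -powRrM mulfV ?gt_eqF // powRr1 //; lra.
Qed.

Lemma cvg_xo z : xo x @[x --> z] --> xo z.
Proof. by apply: cvgB; [exact: cvg_cst | exact: cvg_fst]. Qed.

Lemma cvg_yo z : yo x @[x --> z] --> yo z.
Proof. by apply: cvgN; exact: cvg_snd. Qed.

Lemma cvg_dist1 z : dist1 x @[x --> z] --> dist1 z.
Proof.
have sq : (fun x => xo x ^+ 2 + yo x ^+ 2) @ z --> xo z ^+ 2 + yo z ^+ 2.
  by rewrite !expr2; apply: cvgD; apply: cvgM; exact: cvg_xo || exact: cvg_yo.
exact: continuous_comp sq (@sqrt_continuous R _).
Qed.

Lemma cvg_dist1Dxo z : dist1 x + xo x @[x --> z] --> dist1 z + xo z.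
Proof. by apply: cvgD; [exact: cvg_dist1 | exact: cvg_xo]. Qed.

Lemma cvg_gap z : 0 < dist1 z + xo z -> gap x @[x --> z] --> gap z.
Proof.
move=> d_gt0; have r_gt0 := dist1_gt0 d_gt0.
have arg_cvg : arg1 x @[x --> z] --> arg1 z.
  have q_cvg : (fun x => yo x / (dist1 x + xo x)) @ z --> yo z / (dist1 z + xo z).
    apply: cvgM; first exact: cvg_yo.
    by apply: cvgV (@cvg_dist1Dxo z); exact: lt0r_neq0.
  by apply: cvgMl_tmp; exact: continuous_comp q_cvg (@continuous_atan R _).
have half_cvg : (fun x => param (arg1 x) / 2) @ z --> param (arg1 z) / 2.
  apply: cvgMr_tmp; apply: cvgMr_tmp; apply: cvgB; last exact: cvg_cst.
  by apply: cvgD; [exact: cvg_cst | exact: arg_cvg].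
have pow_cvg : (fun x => dist1 x `^ a^-1) @ z --> dist1 z `^ a^-1.
  exact: (continuous_comp (@cvg_dist1 z) (continuous_powR r_gt0)).
have sin_cvg : (fun x => sin (param (arg1 x) / 2)) @ z --> sin (param (arg1 z) / 2).
  exact: (continuous_comp half_cvg (@continuous_sin R _)).
by apply: cvgB pow_cvg _; apply: cvgMl_tmp.
Qed.

Lemma open_inner : open inner.
Proof.
rewrite openE => z [d_gt0 gap_lt0].
near=> x; split; near: x.
- exact: cvgr_gt _ (@cvg_dist1Dxo z) 0 d_gt0.
- exact: cvgr_lt _ (cvg_gap d_gt0) 0 gap_lt0.
Unshelve. all: by end_near. Qed.

(* Off the curve, a limit point of [inner] with [dist1 z + xo z > 0] has
   [gap z < 0] by continuity; otherwise [z] lies on the half-line [x > 1],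
   which [inner_cone] keeps away from [inner]. *)
Lemma closure_inner z : ~ curve a z -> closure inner z -> inner z.
Proof.
move=> z_curve z_cl.
have [d_gt0|d_le0] := ltP 0 (dist1 z + xo z).
  have [gap_lt0|gap_gt0|gap0] := ltgtP (gap z) 0; first by [].
  - have [y [[_ /ltW y_le] y_gt]] := z_cl _ (cvgr_gt _ (cvg_gap d_gt0) 0 gap_gt0).
    by move: y_gt; rewrite /= ltNge y_le.
  - by case: z_curve; exact: gap_eq0_curve.
have xoE : xo z = - dist1 z.
  by have [+ _] := norm_xo_yo_le_dist1 z; rewrite ler_norml; lra.
have yo0 : yo z = 0.
  have := dist1_sqr z; rewrite xoE sqrrN => e.
  by apply/eqP; rewrite -sqrf_eq0; apply/eqP; lra.
have : xo z <= 0 by rewrite xoE oppr_le0 sqrtr_ge0.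
rewrite le_eqVlt => /orP[/eqP xo0|xo_lt0].
  case: z_curve; case: z {z_cl d_le0 xoE} yo0 xo0 => x y.
  rewrite /xo /yo /= => y0 x0.
  have -> : x = 1 by lra.
  have -> : y = 0 by lra.
  exact: curve_one.
pose g x := xo x ^+ 2 * (1 - c ^+ 2) - c ^+ 2 * yo x ^+ 2.
have g_cvg : g x @[x --> z] --> g z.
  by rewrite /g !expr2; apply: cvgB; [apply: cvgMr_tmp | apply: cvgMl_tmp];
    apply: cvgM; exact: cvg_xo || exact: cvg_yo.
have g_gt0 : 0 < g z.
  rewrite /g yo0 expr0n /= mulr0 subr0 mulr_gt0 ?subr_gt0 ?expr_lt1 ?c_lt1 ?c_ge0 //.
  by rewrite expr2 nmulr_rgt0.
have near_z : \forall x \near z, 0 < g x /\ xo x < 0.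
  near=> x; split; near: x.
  - exact: cvgr_gt _ g_cvg 0 g_gt0.
  - exact: cvgr_lt _ (@cvg_xo z) 0 xo_lt0.
have [y [Wy [g_y xo_y]]] := z_cl _ near_z.
by have := inner_cone Wy xo_y; move: g_y; rewrite /g; lra.
Unshelve. all: by end_near. Qed.

Lemma component_subset_inner lam : 1 - 2 `^ a < lam < 1 ->
  connected_component (~` curve a) (lam, 0) `<=` inner.
Proof.
move=> lam_in; have lam_inner := inner_real_axis lam_in.
have lam_curve : ~ curve a (lam, 0).
  by move/curve_real_axis; move: lam_in => /andP[? ?] [e|e]; lra.
apply: connected_subset_open.
- exact: component_connected.
- by exists (lam, 0); split => //; exact: connected_component_refl.
- exact: open_inner.
- by move=> z [/connected_component_sub z_curve /(closure_inner z_curve)].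
Qed.

Lemma not_Omega_real_axis (S : set R) lam : is_interval S -> S lam ->
  (forall M, exists2 x, S x & M < `|x|) ->
  (forall x, S x -> ~ curve a (x, 0)) -> ~ Omega a (lam, 0).
Proof.
move=> S_itv S_lam S_unbounded S_curve [_ [M bounded]].
have [x Sx M_lt] := S_unbounded M.
have axis_sub : [set (x, 0 : R) | x in S] `<=` connected_component (~` curve a) (lam, 0).
  apply: connected_component_max; first by exists lam.
    by move=> _ [y Sy <-]; exact: S_curve.
  exact: connected_real_axis.
have [+ _] := bounded (x, 0) (axis_sub _ (ex_intro2 _ _ x Sx erefl)).
by rewrite /=; lra.
Qed.

Lemma not_Omega_below lam : lam < 1 - 2 `^ a -> ~ Omega a (lam, 0).
Proof.
move=> lam_lt; have pow_gt0 : 0 < 2 `^ a by exact: powR_gt0.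
apply: (not_Omega_real_axis (S := [set x | x <= lam])).
- by move=> x y x_le y_le w /andP[_ /le_trans]; apply.
- exact: lexx.
- move=> M; have := normr_ge0 M; have := ler_norm M; have := ler_norm (- lam).
  rewrite normrN => ? ? ?; exists (- `|M| - `|lam| - 1); first by rewrite /=; lra.
  by rewrite ltr0_norm; lra.
- by move=> x /= x_le /curve_real_axis [e|e]; lra.
Qed.

Lemma not_Omega_above lam : 1 < lam -> ~ Omega a (lam, 0).
Proof.
move=> lam_gt; have pow_gt0 : 0 < 2 `^ a by exact: powR_gt0.
apply: (not_Omega_real_axis (S := [set x | lam <= x])).
- by move=> x y x_ge y_ge w /andP[/(le_trans x_ge) ?].
- exact: lexx.
- move=> M; have := normr_ge0 M; have := ler_norm M; have := ler_norm lam => ? ? ?.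
  exists (`|M| + `|lam| + 1); first by rewrite /=; lra.
  by rewrite gtr0_norm; lra.
- by move=> x /= x_ge /curve_real_axis [e|e]; lra.
Qed.

End Omega.

Theorem mainTheorem2 (R : realType) (a : R) (ha0 : 0 < a) (ha1 : a <= 1)
  (lam : R) :
  Omega a (lam, 0) <-> 1 - 2 `^ a < lam < 1.
Proof.
split=> [lam_Omega|lam_in].
  apply/andP; split.
    have [//|lam_lt|lam_eq] := ltgtP (1 - 2 `^ a) lam.
      by case: (not_Omega_below ha0 ha1 lam_lt lam_Omega).
    by case: lam_Omega.1; rewrite -lam_eq; exact: curve_one_sub_pow.
  have [//|lam_gt|lam_eq] := ltgtP lam 1.
    by case: (not_Omega_above ha0 ha1 lam_gt lam_Omega).
  by case: lam_Omega.1; rewrite lam_eq; exact: curve_one.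
split.
  have pow_gt0 : 0 < 2 `^ a by exact: powR_gt0.
  by move/(curve_real_axis ha0 ha1); move: lam_in => /andP[? ?] [e|e]; lra.
have [M inner_M] := inner_bounded ha0 ha1.
by exists M => z /(component_subset_inner ha0 ha1 lam_in)/inner_M.
Qed.
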